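(* Let $\Delta>0$, $\varepsilon_{\mathrm{opt}}<\Delta$ and $b'=b+\Delta$. Let $\bar\pi$ be a policy with $\hat V^{\bar\pi}_{r_p}(\rho)\ge\hat V^{\hat\pi^*}_{r_p}(\rho)-\varepsilon_{\mathrm{opt}}$ and $\hat V^{\bar\pi}_c(\rho)\ge b'-\varepsilon_{\mathrm{opt}}$ (e.g. the output $\bar\pi_T$ of the primal-dual algorithm under the conditions of its guarantee). Suppose $$|V^{\bar\pi}_c(\rho)-\hat V^{\bar\pi}_c(\rho)|\le\Delta-\varepsilon_{\mathrm{opt}},\qquad|V^{\pi^*}_c(\rho)-\hat V^{\pi^*}_c(\rho)|\le\Delta.$$ Then (a) $V^{\bar\pi}_c(\rho)\ge b$, and (b) $$V^{\pi^*}_r(\rho)-V^{\bar\pi}_r(\rho)\le\frac{2\omega}{1-\gamma}+\varepsilon_{\mathrm{opt}}+2\Delta\lambda^*+|V^{\pi^*}_{r_p}(\rho)-\hat V^{\pi^*}_{r_p}(\rho)|+|\hat V^{\bar\pi}_{r_p}(\rho)-V^{\bar\pi}_{r_p}(\rho)|.$$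
   Context: A discounted CMDP $M=\langle\mathcal S,\mathcal A,\mathcal P,r,c,b,\rho,\gamma\rangle$ with finite state and action sets, reward $r:\mathcal S\times\mathcal A\to[0,1]$, constraint reward $c:\mathcal S\times\mathcal A\to[0,1]$, threshold $b$, initial distribution $\rho$, discount $\gamma\in[0,1)$. $V^\pi_g(\rho)$ is the discounted value of policy $\pi$ for reward $g$ under $\mathcal P$, $s_0\sim\rho$; hats denote values under an empirical kernel $\hat{\mathcal P}$. $r_p=r+\xi$ with $\xi(s,a)\in[0,\omega]$. $\pi^*$ is an optimal policy of $\max_\pi V^\pi_r(\rho)$ s.t. $V^\pi_c(\rho)\ge b$; $\hat\pi^*$ is an optimal policy of $\max_\pi\hat V^\pi_{r_p}(\rho)$ s.t. $\hat V^\pi_c(\rho)\ge b'$, and $\lambda^*\ge0$ its optimal dual variable, i.e. a minimizer over $\lambda\ge0$ of $\max_\pi[\hat V^\pi_{r_p}(\rho)+\lambda(\hat V^\pi_c(\rho)-b')]$ (strong duality holds). *)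

From HB Require Import structures.
From mathcomp Require Import all_boot all_order all_algebra.
From mathcomp Require Import all_classical all_reals all_analysis.
Set Implicit Arguments. Unset Strict Implicit. Unset Printing Implicit Defensive.
Import Order.TTheory GRing.Theory Num.Theory.
Import numFieldNormedType.Exports.
Local Open Scope ring_scope.
Local Open Scope classical_set_scope.

Section CMDP.
Variables (R : realType) (S A : finType).

Definition is_distr (T : finType) (d : T -> R) : Prop :=
  (forall x, 0 <= d x) /\ \sum_(x : T) d x = 1.

Definition is_kernel (P : S -> A -> S -> R) : Prop :=
  forall s a, is_distr (P s a).

Definition is_policy (pi : S -> A -> R) : Prop :=
  forall s, is_distr (pi s).

(* state distribution at time t when s_0 ~ rho, a_t ~ pi(.|s_t), s_{t+1} ~ P(.|s_t,a_t) *)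
Fixpoint state_dist (P : S -> A -> S -> R) (pi : S -> A -> R) (rho : S -> R)
  (t : nat) : S -> R :=
  match t with
  | 0 => rho
  | t'.+1 => fun s' => \sum_(s : S) \sum_(a : A)
              state_dist P pi rho t' s * pi s a * P s a s'
  end.

Definition exp_reward (P : S -> A -> S -> R) (pi : S -> A -> R)
  (g : S -> A -> R) (rho : S -> R) (t : nat) : R :=
  \sum_(s : S) \sum_(a : A) state_dist P pi rho t s * pi s a * g s a.

Definition value (P : S -> A -> S -> R) (gamma : R) (pi : S -> A -> R)
  (g : S -> A -> R) (rho : S -> R) : R :=
  limn (series (fun t => gamma ^+ t * exp_reward P pi g rho t)).

Definition is_opt_constrained (P : S -> A -> S -> R) (gamma : R)
  (f h : S -> A -> R) (thr : R) (rho : S -> R) (pi : S -> A -> R) : Prop :=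
  is_policy pi /\ thr <= value P gamma pi h rho /\
  forall pi', is_policy pi' -> thr <= value P gamma pi' h rho ->
    value P gamma pi' f rho <= value P gamma pi f rho.

Definition dual_fun (P : S -> A -> S -> R) (gamma : R)
  (f h : S -> A -> R) (thr : R) (rho : S -> R) (lambda : R) : R :=
  sup [set x | exists pi, is_policy pi /\
        x = value P gamma pi f rho + lambda * (value P gamma pi h rho - thr)].

End CMDP.

(** The constraint part is pure bookkeeping: the empirical constraint value of
    [pibar] is at least [b + Delta - eps_opt] and the estimation error eats at
    most [Delta - eps_opt] of it.  For the regret, compare [pi_star] with [pibar]
    through the perturbed empirical problem: adding or removing the
    perturbation [xi] costs at most [omega / (1 - gamma)], moving between true and
    empirical values costs the two absolute errors, and [pi_star] is feasible
    for the empirical problem up to a constraint violation of [2 Delta], which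
    weak duality with the optimal multiplier [lambda_star] prices at
    [2 Delta lambda_star]. *)

From HB Require Import structures.
From mathcomp Require Import all_boot all_order all_algebra.
From mathcomp Require Import all_classical all_reals all_analysis.
From mathcomp Require Import lra.
Set Implicit Arguments. Unset Strict Implicit. Unset Printing Implicit Defensive.
Import Order.TTheory GRing.Theory Num.Theory.
Import numFieldNormedType.Exports.
Local Open Scope ring_scope.

Section DiscountedValue.
Variables (R : realType) (S A : finType).
Variables (P : S -> A -> S -> R) (gamma : R) (pi : S -> A -> R) (rho : S -> R).
Hypotheses (HP : is_kernel P) (Hpi : is_policy pi) (Hrho : is_distr rho).
Hypothesis Hgamma : 0 <= gamma < 1.

Lemma state_dist_distr t : is_distr (state_dist P pi rho t).
Proof.
elim: t => [|t [IH0 IH1]] //=; split.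
- move=> s'; apply: sumr_ge0 => s _; apply: sumr_ge0 => a _.
  by rewrite !mulr_ge0 //; [case: (Hpi s) | case: (HP s a)].
- rewrite exchange_big /= -IH1; apply: eq_bigr => s _.
  have [_ pi1] := Hpi s.
  rewrite exchange_big /= -[RHS]mulr1 -pi1 mulr_sumr; apply: eq_bigr => a _.
  by rewrite -mulr_sumr; case: (HP s a) => _ ->; rewrite mulr1.
Qed.

Lemma exp_reward_bound (g : S -> A -> R) (M : R) t :
  (forall s a, 0 <= g s a <= M) -> 0 <= exp_reward P pi g rho t <= M.
Proof.
move=> Hg; have [d0 d1] := state_dist_distr t.
rewrite /exp_reward; apply/andP; split.
- apply: sumr_ge0 => s _; apply: sumr_ge0 => a _.
  have /andP[g0 _] := Hg s a.
  by rewrite !mulr_ge0 //; case: (Hpi s).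
- rewrite -[M]mul1r -d1 mulr_suml; apply: ler_sum => s _.
  have [pi0 pi1] := Hpi s.
  rewrite -[_ * M]mulr1 -pi1 mulr_sumr; apply: ler_sum => a _.
  have /andP[_ gM] := Hg s a.
  by rewrite -[_ * M * _]mulrA [M * _]mulrC mulrA ler_wpM2l // mulr_ge0.
Qed.

Definition discounted_rewards (g : S -> A -> R) : R^nat :=
  fun t => gamma ^+ t * exp_reward P pi g rho t.

Lemma discounted_rewards_geometric (g : S -> A -> R) (M : R) :
  (forall s a, 0 <= g s a <= M) ->
  (forall t, 0 <= discounted_rewards g t <= geometric M gamma t) /\ 0 <= M.
Proof.
move=> Hg; have /andP[g0 _] := Hgamma.
split; last by have /andP[e0 eM] := exp_reward_bound 0 Hg; exact: le_trans eM.
move=> t; have /andP[e0 eM] := exp_reward_bound t Hg.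
by rewrite /discounted_rewards /= mulr_ge0 ?exprn_ge0 // mulrC ler_wpM2r ?exprn_ge0.
Qed.

Lemma value_cvg_bound (g : S -> A -> R) (M : R) :
  (forall s a, 0 <= g s a <= M) ->
  cvgn (series (discounted_rewards g)) /\
  0 <= value P gamma pi g rho <= M / (1 - gamma).
Proof.
move=> Hg; have /andP[g0 g1] := Hgamma.
have [u_bnd M0] := discounted_rewards_geometric Hg.
have u0 t : 0 <= discounted_rewards g t by have /andP[] := u_bnd t.
have uM t : discounted_rewards g t <= geometric M gamma t by have /andP[] := u_bnd t.
have ng : `|gamma| < 1 by rewrite ger0_norm.
have cgeo := @is_cvg_geometric_series _ M _ ng.
have cu : cvgn (series (discounted_rewards g)).
  apply: series_le_cvg u0 _ uM cgeo => t.
  by rewrite /geometric /= mulr_ge0 ?exprn_ge0.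
split => //; rewrite /value -/(discounted_rewards g); apply/andP; split.
- by apply: (limr_ge cu); near=> n; exact: sumr_ge0.
- apply: le_trans (lim_series_le cu cgeo uM) _.
  by rewrite (cvg_lim _ (@cvg_geometric_series _ M _ ng)).
Unshelve. all: by end_near.
Qed.

Lemma valueD (f g : S -> A -> R) (Mf Mg : R) :
  (forall s a, 0 <= f s a <= Mf) -> (forall s a, 0 <= g s a <= Mg) ->
  value P gamma pi (fun s a => f s a + g s a) rho =
  value P gamma pi f rho + value P gamma pi g rho.
Proof.
move=> Hf Hg.
have [cf _] := value_cvg_bound Hf; have [cg _] := value_cvg_bound Hg.
rewrite /value -/(discounted_rewards f) -/(discounted_rewards g).
rewrite -/(discounted_rewards (fun s a => f s a + g s a)).
have -> : discounted_rewards (fun s a => f s a + g s a)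
          = discounted_rewards f + discounted_rewards g.
  apply/funext => t; rewrite /discounted_rewards /exp_reward /=.
  rewrite [in RHS]/GRing.add /= -mulrDr -big_split /=.
  congr (_ * _); apply: eq_bigr => s _.
  by rewrite -big_split /=; apply: eq_bigr => a _; rewrite mulrDr.
by rewrite seriesD limD.
Qed.

Lemma value_perturbed_bounds (r xi : S -> A -> R) (M omega : R) :
  (forall s a, 0 <= r s a <= M) -> (forall s a, 0 <= xi s a <= omega) ->
  value P gamma pi r rho <= value P gamma pi (fun s a => r s a + xi s a) rho
    <= value P gamma pi r rho + omega / (1 - gamma).
Proof.
move=> Hr Hxi; rewrite (valueD Hr Hxi).
have [_ /andP[xi0 xiw]] := value_cvg_bound Hxi.
by rewrite lerDl xi0 lerD2l.
Qed.

End DiscountedValue.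

Lemma lagrangian_le_dual_fun (R : realType) (S A : finType)
    (P : S -> A -> S -> R) (gamma : R) (f h : S -> A -> R) (Mf Mh thr : R)
    (rho : S -> R) (lambda : R) (pi : S -> A -> R) :
  is_kernel P -> is_distr rho -> 0 <= gamma < 1 ->
  (forall s a, 0 <= f s a <= Mf) -> (forall s a, 0 <= h s a <= Mh) ->
  0 <= lambda -> is_policy pi ->
  value P gamma pi f rho + lambda * (value P gamma pi h rho - thr)
    <= dual_fun P gamma f h thr rho lambda.
Proof.
move=> HP Hrho Hgamma Hf Hh l0 Hpi; apply: ub_le_sup; last by exists pi.
exists (Mf / (1 - gamma) + lambda * (Mh / (1 - gamma) - thr)) => _ [pi' [Hpi' ->]].
have [_ /andP[_ vf]] := value_cvg_bound HP Hpi' Hrho Hgamma Hf.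
have [_ /andP[_ vh]] := value_cvg_bound HP Hpi' Hrho Hgamma Hh.
by rewrite lerD // ler_wpM2l // lerD2r.
Qed.

Theorem mainTheorem9 (R : realType) (S A : finType)
  (P Phat : S -> A -> S -> R) (r c xi : S -> A -> R) (b : R) (rho : S -> R)
  (gamma omega Delta eps_opt lambda_star : R)
  (pi_star pihat_star pibar : S -> A -> R) :
  is_kernel P -> is_kernel Phat -> is_distr rho ->
  0 <= gamma < 1 ->
  (forall s a, 0 <= r s a <= 1) -> (forall s a, 0 <= c s a <= 1) ->
  (forall s a, 0 <= xi s a <= omega) ->
  0 < Delta -> eps_opt < Delta ->
  is_opt_constrained P gamma r c b rho pi_star ->
  is_opt_constrained Phat gamma (fun s a => r s a + xi s a) c (b + Delta) rho pihat_star ->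
  0 <= lambda_star ->
  (forall l, 0 <= l ->
     dual_fun Phat gamma (fun s a => r s a + xi s a) c (b + Delta) rho lambda_star
     <= dual_fun Phat gamma (fun s a => r s a + xi s a) c (b + Delta) rho l) ->
  dual_fun Phat gamma (fun s a => r s a + xi s a) c (b + Delta) rho lambda_star
    = value Phat gamma pihat_star (fun s a => r s a + xi s a) rho ->
  is_policy pibar ->
  value Phat gamma pibar (fun s a => r s a + xi s a) rho
    >= value Phat gamma pihat_star (fun s a => r s a + xi s a) rho - eps_opt ->
  value Phat gamma pibar c rho >= b + Delta - eps_opt ->
  `|value P gamma pibar c rho - value Phat gamma pibar c rho| <= Delta - eps_opt ->
  `|value P gamma pi_star c rho - value Phat gamma pi_star c rho| <= Delta ->
  value P gamma pibar c rho >= b /\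
  value P gamma pi_star r rho - value P gamma pibar r rho <=
    2 * omega / (1 - gamma) + eps_opt + 2 * Delta * lambda_star
    + `|value P gamma pi_star (fun s a => r s a + xi s a) rho
        - value Phat gamma pi_star (fun s a => r s a + xi s a) rho|
    + `|value Phat gamma pibar (fun s a => r s a + xi s a) rho
        - value P gamma pibar (fun s a => r s a + xi s a) rho|.
Proof.
move=> HP HPh Hrho Hgamma Hr Hc Hxi _ _ [Hps [pi_star_feas _]] _ l0 _ dual_opt Hpb
  pibar_opt pibar_feas err_pibar err_pistar.
set rp := fun s a => r s a + xi s a in dual_opt pibar_opt *.
have Hrp s a : 0 <= rp s a <= 1 + omega.
  have /andP[r0 r1] := Hr s a; have /andP[x0 x1] := Hxi s a.
  by rewrite addr_ge0 ?lerD.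
move: err_pibar err_pistar; rewrite !ler_norml => /andP[e1 _] /andP[_ e2].
split; first lra.
have /andP[pert_star _] := value_perturbed_bounds HP Hps Hrho Hgamma Hr Hxi.
have /andP[_ pert_bar] := value_perturbed_bounds HP Hpb Hrho Hgamma Hr Hxi.
have weak_duality :=
  lagrangian_le_dual_fun (b + Delta) HPh Hrho Hgamma Hrp Hc l0 Hps.
rewrite dual_opt in weak_duality.
have slack_price : - (2 * Delta * lambda_star)
    <= lambda_star * (value Phat gamma pi_star c rho - (b + Delta)).
  by rewrite -mulNr [X in _ <= X]mulrC ler_wpM2r //; lra.
have N1 := ler_norm (value P gamma pi_star rp rho - value Phat gamma pi_star rp rho).
have N2 := ler_norm (value Phat gamma pibar rp rho - value P gamma pibar rp rho).
have [_ /andP[xi0 xiW]] := value_cvg_bound HP Hpb Hrho Hgamma Hxi.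
have W0 : 0 <= omega / (1 - gamma) := le_trans xi0 xiW.
rewrite -mulrA.
clear -N1 N2 weak_duality slack_price pibar_opt W0 pert_star pert_bar; lra.
Qed.
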